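(* For all integers $m\ge1$ and $n\ge1$, $$M(\mathcal G(m,-2-n))=\epsilon_{m,n}\,T(m,n),$$ where $T(m,n)$ is the number of perfect matchings of the $m$-by-$n$ grid graph and $\epsilon_{m,n}=-1$ if $m\equiv2\pmod 4$ and $n$ is odd, $\epsilon_{m,n}=+1$ otherwise. Moreover, every perfect matching of $\mathcal G(m,-2-n)$ has the same sign $\epsilon_{m,n}$.
   Context: Grid conventions: an $m$-by-$N$ grid has vertices $(i,j)$, $1\le i\le m$ (rows), $1\le j\le N$ (columns); horizontal edges join $(i,j),(i,j+1)$, vertical edges join $(i,j),(i+1,j)$. A signed graph is a graph each of whose edges carries a sign $+1$ or $-1$. For a signed graph $\mathcal G$, $M(\mathcal G)$ denotes the sum over all perfect matchings of $\mathcal G$ of the product of the signs of the edges in the matching. For $n\le 0$, $\mathcal G(m,n)$ has the vertex set of the $m$-by-$(2-n)$ grid, all horizontal edges of that grid with sign $+1$, the vertical edges lying in columns $2,3,\dots,1-n$ with sign $-1$, and no vertical edges in columns $1$ and $2-n$. *)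

From mathcomp Require Import all_boot all_order all_algebra.
Set Implicit Arguments. Unset Strict Implicit. Unset Printing Implicit Defensive.
Import GRing.Theory Num.Theory.
Local Open Scope ring_scope.

(* Vertices of an m-by-N grid: pairs (i,j) with i : 'I_m the row and
   j : 'I_N the column, 0-indexed (paper's (i+1, j+1)). *)
Definition gridV (m N : nat) := ('I_m * 'I_N)%type.

Definition hadj m N (u v : gridV m N) : bool :=
  (u.1 == v.1) && (u.2.+1 == v.2 :> nat).
Definition vadj m N (u v : gridV m N) : bool :=
  (u.2 == v.2) && (u.1.+1 == v.1 :> nat).

(* A graph on a finite vertex type is given by its edge set, each edge being
   a 2-element vertex set.  A perfect matching is a set of edges covering
   every vertex exactly once. *)
Definition perfect_matching (V : finType) (E M : {set {set V}}) : bool :=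
  (M \subset E) && [forall v : V, #|[set e in M | v \in e]| == 1%N].

Definition matching_sign (V : finType) (s : {set V} -> int) (M : {set {set V}}) : int :=
  \prod_(e in M) s e.

Definition signed_matching_sum (V : finType) (E : {set {set V}})
  (s : {set V} -> int) : int :=
  \sum_(M : {set {set V}} | perfect_matching E M) matching_sign s M.

Definition grid_edges m N : {set {set gridV m N}} :=
  [set [set u; v] | u in [set: gridV m N], v in [set: gridV m N] & hadj u v || vadj u v].

Definition T (m n : nat) : nat :=
  #|[set M : {set {set gridV m n}} | perfect_matching (grid_edges m n) M]|.

(* The signed graph G(m,n) for n <= 0: grid with 2-n columns. *)
Definition Gcols (n : int) : nat := `|2 - n|%N.

Definition G_horiz m (n : int) : {set {set gridV m (Gcols n)}} :=
  [set [set u; v] | u in [set: gridV m (Gcols n)], v in [set: gridV m (Gcols n)]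
     & hadj u v].
(* vertical edges only in (1-indexed) columns 2,...,1-n, i.e. 0-indexed
   columns 1,...,(Gcols n) - 2 *)
Definition G_vert m (n : int) : {set {set gridV m (Gcols n)}} :=
  [set [set u; v] | u in [set: gridV m (Gcols n)], v in [set: gridV m (Gcols n)]
     & [&& vadj u v, (1 <= u.2)%N & (u.2 <= (Gcols n).-2)%N]].

Definition G_edges m (n : int) := G_horiz m n :|: G_vert m n.

Definition G_sign m (n : int) (e : {set gridV m (Gcols n)}) : int :=
  if e \in G_vert m n then -1 else 1.

Definition MG (m : nat) (n : int) : int :=
  signed_matching_sum (G_edges m n) (@G_sign m n).

Definition eps (m n : nat) : int :=
  if (m %% 4 == 2)%N && odd n then -1 else 1.

From mathcomp Require Import all_boot all_order all_algebra.
From mathcomp Require Import zify.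
Set Implicit Arguments. Unset Strict Implicit. Unset Printing Implicit Defensive.
Import GRing.Theory Num.Theory.
Local Open Scope ring_scope.

(* Weight vertex (i, j) by (-1)^i.  The sign of every edge of G(m, -2-n) is the
   product of the weights of its ends (+1 horizontally, -1 vertically), so a
   perfect matching has sign the product of all weights, (-1)^(C(m,2) (n+4));
   the existence of a perfect matching makes m (n+4) even, which turns this
   into eps m n.  The vertices of the first and last columns have no vertical
   edge, so the horizontal dominoes on columns 0-1 and (n+2)-(n+3) are forced,
   and the rest of the matching is a perfect matching of the m-by-n grid on the
   middle columns. *)

Lemma mem_pair_set (V : finType) (P : V -> V -> bool) (e : {set V}) :
  reflect (exists u v, P u v /\ e = [set u; v])
    (e \in [set [set u; v] | u in [set: V], v in [set: V] & P u v]).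
Proof.
apply: (iffP idP).
  by case/imset2P => u v _; rewrite inE => /andP[_ Puv] ->; exists u, v.
case=> u [v [Puv ->]].
by apply: (@imset2_f _ _ _ (fun u v => [set u; v])); rewrite !inE ?Puv.
Qed.

Section PerfectMatching.
Variables (V : finType) (E M : {set {set V}}).

Lemma perfect_matching_intro :
  M \subset E -> (forall x, exists2 e, e \in M & x \in e) ->
  (forall x e1 e2, e1 \in M -> e2 \in M -> x \in e1 -> x \in e2 -> e1 = e2) ->
  perfect_matching E M.
Proof.
move=> subME covered uniq; apply/andP; split=> //; apply/forallP => x; apply/cards1P.
have [e Me xe] := covered x; exists e; apply/setP => e'; rewrite !inE.
by apply/andP/eqP => [[Me' xe'] | ->]; [exact: uniq xe' xe | ].
Qed.

Hypothesis pmM : perfect_matching E M.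

Lemma pm_sub e : e \in M -> e \in E.
Proof. by case/andP: pmM => /subsetP/(_ e). Qed.

Lemma pm_edge_uniq e1 e2 x :
  e1 \in M -> e2 \in M -> x \in e1 -> x \in e2 -> e1 = e2.
Proof.
case/andP: pmM => _ /forallP/(_ x)/cards1P[e0 Mx] Me1 Me2 xe1 xe2.
have : e1 \in [set e in M | x \in e] by rewrite inE Me1 xe1.
have : e2 \in [set e in M | x \in e] by rewrite inE Me2 xe2.
by rewrite Mx !inE => /eqP -> /eqP ->.
Qed.

Lemma pm_covered x : exists2 e, e \in M & x \in e.
Proof.
case/andP: pmM => _ /forallP/(_ x)/cards1P[e0 Mx].
have : e0 \in [set e in M | x \in e] by rewrite Mx set11.
by rewrite inE => /andP[]; exists e0.
Qed.

Lemma big_pm (R : Type) (idx : R) (op : Monoid.com_law idx) (F : V -> R) :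
  \big[op/idx]_(e in M) \big[op/idx]_(x in e) F x = \big[op/idx]_x F x.
Proof.
have trivM : trivIset M.
  apply/trivIsetP => e1 e2 Me1 Me2 ne12; apply/pred0P => x /=.
  apply/negP => /andP[xe1 xe2].
  by move: ne12; rewrite (pm_edge_uniq Me1 Me2 xe1 xe2) eqxx.
have coverM : cover M = [set: V].
  apply/setP => x; rewrite inE; apply/bigcupP.
  by case: (pm_covered x) => e; exists e.
by rewrite -(big_trivIset _ trivM) coverM; apply: eq_bigl => x; rewrite inE.
Qed.

Lemma pm_card_even : {in E, forall e : {set V}, #|e| = 2%N} -> ~~ odd #|V|.
Proof.
move=> card_e; rewrite -sum1_card -(big_pm addn).
rewrite (eq_bigr (fun _ => 2%N)) => [|e Me]; last by rewrite sum1_card card_e ?pm_sub.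
by rewrite sum_nat_const oddM andbF.
Qed.

Lemma matching_sign_vertexwise (s : {set V} -> int) (g : V -> int) :
  {in E, forall e : {set V}, s e = \prod_(x in e) g x} -> matching_sign s M = \prod_x g x.
Proof.
move=> s_e; rewrite -(big_pm (@GRing.mul int)).
by apply: eq_bigr => e Me; rewrite s_e ?pm_sub.
Qed.

End PerfectMatching.

Lemma gridV_eq m N (u v : gridV m N) : u.1 = v.1 -> u.2 = v.2 :> nat -> u = v.
Proof. by case: u v => [? ?] [? ?] /= -> /val_inj ->. Qed.

(* [G_edges m k] and [G_sign m k] are [open_grid_edges m (Gcols k)] and
   [open_grid_sign m (Gcols k)]: the graph G(m, k) as a function of its number
   of columns. *)
Definition hedges m N : {set {set gridV m N}} :=
  [set [set u; v] | u in [set: gridV m N], v in [set: gridV m N] & hadj u v].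
Definition inner_vedges m N : {set {set gridV m N}} :=
  [set [set u; v] | u in [set: gridV m N], v in [set: gridV m N]
     & [&& vadj u v, (1 <= u.2)%N & (u.2 <= N.-2)%N]].
Definition open_grid_edges m N := hedges m N :|: inner_vedges m N.
Definition open_grid_sign m N (e : {set gridV m N}) : int :=
  if e \in inner_vedges m N then -1 else 1.

Lemma open_grid_edgeP m N (e : {set gridV m N}) : e \in open_grid_edges m N ->
  exists u v : gridV m N, e = [set u; v] /\
    (u.1 = v.1 :> nat /\ u.2.+1 = v.2 :> nat \/
     u.2 = v.2 :> nat /\ u.1.+1 = v.1 :> nat /\ (1 <= u.2 <= N.-2)%N).
Proof.
rewrite inE => /orP[] /mem_pair_set[u [v [adj_uv ->]]]; exists u, v; split => //.
  by case/andP: adj_uv => /eqP -> /eqP ->; left.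
by case/and3P: adj_uv => /andP[/eqP -> /eqP ->] -> ->; right.
Qed.

Lemma card_open_grid_edge m N :
  {in open_grid_edges m N, forall e : {set gridV m N}, #|e| = 2%N}.
Proof.
move=> e /open_grid_edgeP[u [v [-> adj_uv]]]; rewrite cards2.
by case: eqP => // eq_uv; move: adj_uv; rewrite eq_uv; lia.
Qed.

Lemma open_grid_sign_rows m N e : e \in open_grid_edges m N ->
  open_grid_sign e = \prod_(x in e) (-1) ^+ x.1.
Proof.
have sqr_sign k : (-1) ^+ k * (-1) ^+ k = 1 :> int.
  by rewrite -exprD addnn -signr_odd odd_double.
rewrite /open_grid_sign.
case: ifP => [/mem_pair_set[u [v [/and3P[/andP[_ /eqP uv1] _ _] ->]]] _ | /negbT ninner].
  rewrite big_setU1 ?big_set1 /=; last first.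
    by rewrite inE; apply/eqP => eq_uv; move: uv1; rewrite eq_uv; lia.
  by rewrite -uv1 exprS mulrCA sqr_sign mulr1.
rewrite inE (negbTE ninner) orbF => /mem_pair_set[u [v [/andP[/eqP uv1 /eqP uv2] ->]]].
rewrite big_setU1 ?big_set1 /=; last first.
  by rewrite inE; apply/eqP => eq_uv; move: uv2; rewrite eq_uv; lia.
by rewrite uv1 sqr_sign.
Qed.

Lemma open_grid_matching_sign m N M : perfect_matching (open_grid_edges m N) M ->
  matching_sign (@open_grid_sign m N) M = (-1) ^+ ('C(m, 2) * N).
Proof.
move=> pmM; rewrite (matching_sign_vertexwise pmM (@open_grid_sign_rows m N)).
have -> : \prod_(x : gridV m N) (-1) ^+ x.1 = \prod_(i < m) \prod_(j < N) (-1) ^+ i :> int.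
  by rewrite pair_big.
rewrite (eq_bigr (fun i : 'I_m => ((-1) ^+ i) ^+ N)) => [|i _].
  by rewrite prodrXl prodrXr -exprM -bin2_sum big_mkord mulnC.
by rewrite prodr_const card_ord.
Qed.

Lemma open_grid_pm_even m N M :
  perfect_matching (open_grid_edges m N) M -> ~~ odd (m * N).
Proof.
by move=> pmM; have := pm_card_even pmM (@card_open_grid_edge m N); rewrite card_prod !card_ord.
Qed.

Lemma odd_bin2_double k : odd 'C(k.*2, 2) = (k.*2 %% 4 == 2)%N.
Proof.
rewrite bin2 -doubleMl doubleK; case: k => [|k] //.
rewrite oddM doubleS /= odd_double andbT.
by have := modn2 k; case: (odd k) => /= k2; apply/esym; lia.
Qed.

Lemma sign_bin2_eps m n : ~~ odd (m * n.+4) ->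
  (-1) ^+ ('C(m, 2) * n.+4) = eps m n :> int.
Proof.
move=> even_mn; rewrite -signr_odd /eps oddM /= !negbK.
case odd_n: (odd n); last by rewrite !andbF.
have even_m : ~~ odd m by move: even_mn; rewrite oddM /= !negbK odd_n andbT.
rewrite !andbT -(odd_double_half m) (negbTE even_m) add0n odd_bin2_double.
by case: ifP.
Qed.

Section ForcedDominoes.
Variables m n : nat.
Local Notation V := (gridV m n).
Local Notation W := (gridV m n.+4).
Local Notation E := (open_grid_edges m n.+4).

Definition embed (x : V) : W := (x.1, inord (x.2 + 2)).

Lemma embed_col x : (embed x).2 = (x.2 + 2)%N :> nat.
Proof. by rewrite /= inordK //; have := ltn_ord x.2; lia. Qed.

Lemma embed_inj : injective embed.
Proof.
move=> x y exy; apply: gridV_eq; first exact: (congr1 fst exy).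
by have := embed_col x; rewrite exy embed_col; lia.
Qed.

Lemma embed_pair u v : embed @: [set u; v] = [set embed u; embed v].
Proof. by rewrite imsetU1 imset_set1. Qed.

Definition border (w : W) := (w.2 <= 1)%N || (n.+2 <= w.2)%N.

Lemma embed_inner x : ~~ border (embed x).
Proof. by rewrite /border embed_col; have := ltn_ord x.2; lia. Qed.

Lemma inner_embed w : ~~ border w -> exists x, w = embed x.
Proof.
rewrite /border => inner_w; have lt_w : (w.2 - 2 < n)%N by have := ltn_ord w.2; lia.
by exists (w.1, Ordinal lt_w); apply: gridV_eq; rewrite ?embed_col //=; lia.
Qed.

Definition domino (i : 'I_m) (a : nat) : {set W} := [set (i, inord a); (i, inord a.+1)].

Lemma mem_domino i a x : (a < n.+3)%N ->
  (x \in domino i a) = (x.1 == i) && (a <= x.2 <= a.+1)%N.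
Proof.
move=> lt_a; case: x => i' j; rewrite !inE !xpair_eqE -!val_eqE /= !inordK //; last lia.
by case: (i' == i) => //=; lia.
Qed.

Lemma domino_edge i a : (a < n.+3)%N -> domino i a \in E.
Proof.
move=> lt_a; rewrite inE; apply/orP; left; apply/mem_pair_set.
by exists (i, inord a), (i, inord a.+1); rewrite /hadj /= eqxx /= !inordK //; lia.
Qed.

Definition forced (w : W) : {set W} := domino w.1 (if (w.2 <= 1)%N then 0%N else n.+2).

Lemma mem_forced w x : x \in forced w =
  (x.1 == w.1) && (if (w.2 <= 1)%N then (x.2 <= 1)%N else (n.+2 <= x.2)%N).
Proof.
rewrite /forced mem_domino; last by case: ifP.
by have := ltn_ord x.2; case: ifP => _ /=; case: (x.1 == w.1) => //=; lia.
Qed.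

Lemma forced_self w : border w -> w \in forced w.
Proof. by rewrite mem_forced eqxx /border; case: ifP => //= ->. Qed.

Lemma forced_mem w x : x \in forced w -> border x /\ forced x = forced w.
Proof.
case: x => i j; rewrite mem_forced /border /= => /andP[/eqP -> col_j].
split; first by case: ifP col_j => _ ->; rewrite ?orbT.
by rewrite /forced /=; case: (leqP w.2 1) col_j => _ col_j; case: leqP => // col_j'; lia.
Qed.

Definition forced_edges := forced @: [set w | border w].

Lemma forced_edge w : forced w \in E.
Proof. by apply: domino_edge; case: ifP. Qed.

Lemma end_edge_forced e w : e \in E -> w \in e ->
  (w.2 == 0 :> nat)%N || (w.2 == n.+3 :> nat) -> e = forced w.
Proof.
case/open_grid_edgeP => -[i1 j1] [[i2 j2] [-> /= adj]].
case: w => i j; rewrite !inE !xpair_eqE -!val_eqE /= => w_e w_end.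
apply/setP => -[i' j']; rewrite mem_forced !inE !xpair_eqE -!val_eqE /=.
have := ltn_ord j1; have := ltn_ord j2; have := ltn_ord j'.
by case: (leqP j 1) => col_j *; apply/idP/idP; lia.
Qed.

Lemma embed_edge (e : {set V}) : (embed @: e \in E) = (e \in grid_edges m n).
Proof.
apply/idP/idP => [/open_grid_edgeP[u [v [e_uv adj_uv]]] | /mem_pair_set[u [v [adj_uv ->]]]].
  have /imsetP[u' _ eu] : u \in embed @: e by rewrite e_uv !inE eqxx.
  have /imsetP[v' _ ev] : v \in embed @: e by rewrite e_uv !inE eqxx orbT.
  have -> : e = [set u'; v'] by apply: (imset_inj embed_inj); rewrite e_uv embed_pair eu ev.
  apply/mem_pair_set; exists u', v'; split => //.
  by move: adj_uv; rewrite /hadj /vadj eu ev !embed_col -!val_eqE /=; lia.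
rewrite embed_pair inE; apply/orP.
have := ltn_ord v.2; have := ltn_ord u.2.
case/orP: adj_uv => /andP[/eqP eq1 /eqP eq2] u_lt v_lt; [left | right];
  apply/mem_pair_set; exists (embed u), (embed v); split => //.
  by rewrite /hadj /= eq1 eqxx embed_col; apply/eqP; rewrite embed_col; lia.
rewrite /vadj -val_eqE /= !embed_col eq2 eqxx /= eq1 eqxx addn2 /= !ltnS.
exact: ltnW v_lt.
Qed.

Lemma inner_edge e' : e' \in E -> {in e', forall y, ~~ border y} ->
  exists e : {set V}, e' = embed @: e.
Proof.
case/open_grid_edgeP => u [v [-> _]] inner_uv.
have [u' ->] := inner_embed (inner_uv u (set21 _ _)).
have [v' ->] := inner_embed (inner_uv v (set22 _ _)).
by exists [set u'; v']; rewrite embed_pair.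
Qed.

Lemma embed_notin_forced (e : {set V}) : embed @: e \notin forced_edges.
Proof.
apply/imsetP => -[w]; rewrite inE => border_w eq_e.
have /imsetP[x _ wx] : w \in embed @: e by rewrite eq_e forced_self.
by move: border_w; rewrite wx (negbTE (embed_inner x)).
Qed.

Lemma forced_edges_border e w : e \in forced_edges -> w \in e -> border w.
Proof. by case/imsetP => w' _ -> /forced_mem[]. Qed.

Lemma embed_image_inner (e : {set V}) w : w \in embed @: e -> ~~ border w.
Proof. by case/imsetP => x _ ->; apply: embed_inner. Qed.

Definition extend (M : {set {set V}}) : {set {set W}} :=
  [set embed @: e | e : {set V} in M] :|: forced_edges.

Definition restrict (M' : {set {set W}}) : {set {set V}} :=
  [set e : {set V} | embed @: e \in M'].

Lemma mem_extend M (e : {set V}) : (embed @: e \in extend M) = (e \in M).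
Proof.
rewrite inE (negbTE (embed_notin_forced e)) orbF mem_imset //.
exact: imset_inj embed_inj.
Qed.

Lemma extend_inj : injective extend.
Proof. by move=> M1 M2 eqM; apply/setP => e; rewrite -!mem_extend eqM. Qed.

Lemma extend_border_edge M e w : e \in extend M -> w \in e -> border w -> e = forced w.
Proof.
rewrite inE => /orP[/imsetP[e0 _ ->] /embed_image_inner/negbTE -> // | /imsetP[w' _ ->] w_e _].
by have [_ ->] := forced_mem w_e.
Qed.

Lemma extend_inner_edge M e x : e \in extend M -> embed x \in e ->
  exists2 e0, e0 \in M & e = embed @: e0.
Proof.
rewrite inE => /orP[/imsetP[e0 Me0 ->] _ | Fe /(forced_edges_border Fe)]; first by exists e0.
by rewrite (negbTE (embed_inner x)).
Qed.

Lemma extend_pm M : perfect_matching (grid_edges m n) M -> perfect_matching E (extend M).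
Proof.
move=> pmM; apply: perfect_matching_intro.
- apply/subsetP => e; rewrite inE => /orP[/imsetP[e0 Me0 ->] | /imsetP[w _ ->]].
    by rewrite embed_edge (pm_sub pmM).
  exact: forced_edge.
- move=> w; have [border_w | /inner_embed[x ->]] := boolP (border w).
    by exists (forced w); rewrite ?forced_self // inE imset_f ?orbT ?inE.
  have [e0 Me0 xe0] := pm_covered pmM x.
  by exists (embed @: e0); rewrite ?mem_extend ?imset_f.
move=> w e1 e2 Me1 Me2 we1 we2.
have [border_w | /inner_embed[x wx]] := boolP (border w).
  by rewrite (extend_border_edge Me1 we1) ?(extend_border_edge Me2 we2).
rewrite wx in we1 we2.
have [a Ma ?] := extend_inner_edge Me1 we1; have [b Mb ?] := extend_inner_edge Me2 we2.
subst e1 e2; rewrite !(mem_imset _ _ embed_inj) in we1 we2.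
by rewrite (pm_edge_uniq pmM Ma Mb we1 we2).
Qed.

Lemma forced_in_pm M' w : perfect_matching E M' -> border w -> forced w \in M'.
Proof.
move=> pmM' border_w.
have [c c_end c_w] : exists2 c : 'I_n.+4,
    (c == 0 :> nat)%N || (c == n.+3 :> nat) & (w.1, c) \in forced w.
  rewrite /forced; case: leqP => _; [exists ord0 | exists ord_max];
    rewrite ?mem_domino //= ?eqxx /=; lia.
have [e Me ce] := pm_covered pmM' (w.1, c).
have [_ <-] := forced_mem c_w.
by rewrite -(end_edge_forced (pm_sub pmM' Me) ce c_end).
Qed.

Lemma pm_edge_forced_or_embed M' e : perfect_matching E M' -> e \in M' ->
  e \in forced_edges \/ exists e0 : {set V}, e = embed @: e0.
Proof.
move=> pmM' Me.
have [/existsP[w /andP[w_e border_w]] | /existsPn inner_e] := boolP [exists w in e, border w].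
  left; rewrite (pm_edge_uniq pmM' Me (forced_in_pm pmM' border_w) w_e) ?forced_self //.
  by apply: imset_f; rewrite inE.
right; apply: (inner_edge (pm_sub pmM' Me)) => w w_e.
by have := inner_e w; rewrite w_e.
Qed.

Lemma restrict_pm M' :
  perfect_matching E M' -> perfect_matching (grid_edges m n) (restrict M').
Proof.
move=> pmM'; apply: perfect_matching_intro.
- by apply/subsetP => e; rewrite inE -embed_edge => /(pm_sub pmM').
- move=> x; have [e' Me' xe'] := pm_covered pmM' (embed x).
  case: (pm_edge_forced_or_embed pmM' Me') => [/forced_edges_border/(_ xe') | [e0 ?]].
    by rewrite (negbTE (embed_inner x)).
  subst e'; exists e0; rewrite ?inE //.
  by rewrite (mem_imset _ _ embed_inj) in xe'.
move=> x e1 e2; rewrite !inE => Me1 Me2 xe1 xe2; apply: (imset_inj embed_inj).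
exact: (pm_edge_uniq pmM' Me1 Me2 (imset_f embed xe1) (imset_f embed xe2)).
Qed.

Lemma extend_restrict M' : perfect_matching E M' -> extend (restrict M') = M'.
Proof.
move=> pmM'; apply/setP => e'; apply/idP/idP.
  rewrite inE => /orP[/imsetP[e0] | /imsetP[w]]; rewrite inE => Me0 ->//.
  exact: forced_in_pm.
move=> Me'; case: (pm_edge_forced_or_embed pmM' Me') => [Fe' | [e0 ?]]; last first.
  by subst e'; rewrite mem_extend inE.
by rewrite inE Fe' orbT.
Qed.

Lemma card_open_grid_pm :
  #|[set M' | perfect_matching E M']| = #|[set M | perfect_matching (grid_edges m n) M]|.
Proof.
have -> : [set M' | perfect_matching E M'] =
    extend @: [set M | perfect_matching (grid_edges m n) M].
  apply/setP => M'; rewrite inE; apply/idP/imsetP => [pmM' | [M]].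
    by exists (restrict M'); rewrite ?inE ?restrict_pm ?extend_restrict.
  by rewrite inE => pmM ->; apply: extend_pm.
by rewrite card_imset //; apply: extend_inj.
Qed.

End ForcedDominoes.

Lemma open_grid_pm_sign m n M : perfect_matching (open_grid_edges m n.+4) M ->
  matching_sign (@open_grid_sign m n.+4) M = eps m n.
Proof.
by move=> pmM; rewrite (open_grid_matching_sign pmM) sign_bin2_eps ?(open_grid_pm_even pmM).
Qed.

Lemma open_grid_signed_sum m n :
  signed_matching_sum (open_grid_edges m n.+4) (@open_grid_sign m n.+4) = eps m n * (T m n)%:Z.
Proof.
rewrite /signed_matching_sum (eq_bigr (fun _ => eps m n)) => [|M]; last exact: open_grid_pm_sign.
have -> : \sum_(M | perfect_matching (open_grid_edges m n.+4) M) eps m n =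
          \sum_(M in [set M | perfect_matching (open_grid_edges m n.+4) M]) eps m n.
  by apply: eq_bigl => M; rewrite inE.
by rewrite sumr_const card_open_grid_pm -mulr_natr natz.
Qed.

Lemma Gcols_neg n : Gcols (- 2 - n%:Z) = n.+4.
Proof. by rewrite /Gcols; have -> : 2 - (- 2 - n%:Z) = n.+4 by lia. Qed.

Theorem mainTheorem7 (m n : nat) :
  (1 <= m)%N -> (1 <= n)%N ->
  MG m (- 2 - n%:Z) = eps m n * (T m n)%:Z /\
  (forall M : {set {set gridV m (Gcols (- 2 - n%:Z))}},
     perfect_matching (G_edges m (- 2 - n%:Z)) M ->
     matching_sign (@G_sign m (- 2 - n%:Z)) M = eps m n).
Proof.
move=> _ _.
(* [Gcols (-2 - n)] occurs in the type of M, so the equation [Gcols_neg] is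
   used on the statement abstracted over the number of columns. *)
pose statement N :=
  signed_matching_sum (open_grid_edges m N) (@open_grid_sign m N) = eps m n * (T m n)%:Z /\
  forall M, perfect_matching (open_grid_edges m N) M ->
    matching_sign (@open_grid_sign m N) M = eps m n.
suff : statement n.+4 by rewrite -Gcols_neg.
by split; [apply: open_grid_signed_sum | apply: open_grid_pm_sign].
Qed.
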